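(* For every task arrival process $\mathcal{T}$, the total measure of times at which the scheduler $\texttt{UNK}$ (described in the context) is saturated is at most $3\,\mathrm{T}_{\texttt{OPT}}$, where $\mathrm{T}_{\texttt{OPT}}$ is the awake time of the optimal offline schedule on $\mathcal{T}$.
   Context: Serial-parallel scheduling problem: $p$ identical processors; a task arrival process is a finite set of tasks $\tau_i=(\sigma_i,\pi_i,t_i)$ with arrival time $t_i\ge 0$, serial work $\sigma_i$, parallel work $\pi_i$, $1\le\pi_i/\sigma_i\le p$. A task runs either as a serial job (work $\sigma_i$, at most one processor at a time) or as a parallel job (work $\pi_i$, any number of processors, rate equal to number of processors); the choice is irrevocable once the task is started; time is continuous and preemption is allowed. A task is alive from arrival until completion; the awake time of a schedule is the measure of the set of times at which some task is alive; $\texttt{OPT}$ is an optimal offline schedule (minimizing awake time). The scheduler $\texttt{UNK}$: whenever there are idle processors, $\texttt{UNK}$ takes any arrived but not-yet-started task $\tau_i$ and, if $\tau_i$ arrived more than $\sigma_i$ time ago, starts its serial job; otherwise it starts its parallel job. At each time $\texttt{UNK}$ allocates one processor to each of the (at most $p$) running serial jobs; at most one parallel job runs at a time, and it receives all processors not used by serial jobs. $\texttt{UNK}$ is saturated at a time if all $p$ processors are in use. *)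

From HB Require Import structures.
From mathcomp Require Import all_boot all_order all_algebra.
From mathcomp Require Import all_classical all_reals all_analysis.
Set Implicit Arguments. Unset Strict Implicit. Unset Printing Implicit Defensive.
Import Order.TTheory GRing.Theory Num.Theory.
Local Open Scope classical_set_scope.
Local Open Scope ring_scope.

Section SerialParallel.
Variable R : realType.

Record task := Task { sigma : R ; piw : R ; arr : R }.

Definition valid_process (p n : nat) (T : 'I_n -> task) : Prop :=
  (0 < p)%N /\
  forall i, 0 <= arr (T i) /\ 0 < sigma (T i) /\
            1 <= piw (T i) / sigma (T i) <= p%:R.

(* par i = true : task i runs as a parallel job (work pi_i), otherwise serial
   (work sigma_i); the choice is fixed (irrevocable).
   rate i t = number of processors given to task i at time t.
   fin i = completion time of task i. *)
Record schedule (n : nat) := Schedule {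
  par : 'I_n -> bool ;
  rate : 'I_n -> R -> R ;
  fin : 'I_n -> R }.

Definition work (b : bool) (tk : task) : R := if b then piw tk else sigma tk.

Definition feasible (p n : nat) (T : 'I_n -> task) (S : schedule n) : Prop :=
  (forall i : 'I_n,
     measurable_fun setT (rate S i) /\
     (forall t, exists k : nat, rate S i t = k%:R) /\
     (forall t, t < arr (T i) \/ fin S i <= t -> rate S i t = 0) /\
     arr (T i) <= fin S i /\
     (~~ par S i -> forall t, rate S i t <= 1) /\
     (\int[@lebesgue_measure R]_(t in `[arr (T i), fin S i]) (rate S i t)%:E
        = (work (par S i) (T i))%:E)%E) /\
  (forall t, \sum_(i < n) rate S i t <= p%:R).

Definition awake (n : nat) (T : 'I_n -> task) (C : 'I_n -> R) : \bar R :=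
  (@lebesgue_measure R) (\bigcup_(i in [set: 'I_n]) `[arr (T i), C i[%classic).

Definition OPT_awake (p n : nat) (T : 'I_n -> task) : \bar R :=
  ereal_inf [set awake T (fin S) | S in [set S : schedule n | feasible p T S]].

(* An execution of UNK is described by start times s and completion times C. *)
Definition unk_serial (n : nat) (T : 'I_n -> task) (s : 'I_n -> R) (i : 'I_n)
  : bool := arr (T i) + sigma (T i) < s i.

Definition running (n : nat) (s C : 'I_n -> R) (i : 'I_n) (t : R) : bool :=
  (s i <= t) && (t < C i).

Definition nser (n : nat) (T : 'I_n -> task) (s C : 'I_n -> R) (t : R) : nat :=
  #|[set j : 'I_n | unk_serial T s j && running s C j t]|.

(* processors allocated by UNK to task i at time t: one per running serial job,
   all remaining processors to the (unique) running parallel job. *)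
Definition unk_rate (p n : nat) (T : 'I_n -> task) (s C : 'I_n -> R)
  (i : 'I_n) (t : R) : R :=
  if running s C i t then
    (if unk_serial T s i then 1 else p%:R - (nser T s C t)%:R)
  else 0.

Definition unk_saturated (p n : nat) (T : 'I_n -> task) (s C : 'I_n -> R)
  (t : R) : Prop := \sum_(i < n) unk_rate p T s C i t = p%:R.

Definition unk_run (p n : nat) (T : 'I_n -> task) (s C : 'I_n -> R) : Prop :=
  (forall i, arr (T i) <= s i /\ s i <= C i /\
     (\int[@lebesgue_measure R]_(t in `[s i, C i]) (unk_rate p T s C i t)%:E
        = (work (~~ unk_serial T s i) (T i))%:E)%E) /\
  (* serial jobs only start when a processor is idle *)
  (forall t, (nser T s C t <= p)%N) /\
  (* a parallel job starts only when a processor is idle, and while it runs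
     no processor is idle, so no job starts strictly inside its run *)
  (forall i, ~~ unk_serial T s i ->
     (nser T s C (s i) < p)%N /\
     forall j, j != i -> ~ (s i < s j < C i)) /\
  (forall i j, i != j -> ~~ unk_serial T s i -> ~~ unk_serial T s j ->
     C i <= s j \/ C j <= s i) /\
  (* greedy: whenever a task is waiting, there are no idle processors *)
  (forall i t, arr (T i) <= t < s i -> unk_saturated p T s C t).

End SerialParallel.

(* At a saturated instant UNK does p units of work, while a feasible schedule S
   does at most p units per awake instant; so it suffices to bound the work UNK
   does in excess of S.  A task costs UNK more than S only if UNK runs it in
   parallel while S runs it serially.  Its parallel job then starts within sigma
   of the arrival t and lasts at least pi/p <= sigma, and parallel jobs of UNK
   never overlap, so the windows [s, s + pi/p) of these tasks are disjoint
   subsets of the intervals [t, t + 2 sigma).  The union of the doubled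
   intervals has at most twice the measure of the union of the [t, t + sigma),
   which lies in the awake set of S.  Hence p |Sat| <= p T_S + 2 p T_S. *)

From HB Require Import structures.
From mathcomp Require Import all_boot all_order all_algebra.
From mathcomp Require Import all_classical all_reals all_analysis.
From mathcomp Require Import lra measurable_realfun.
Set Implicit Arguments. Unset Strict Implicit. Unset Printing Implicit Defensive.
Import Order.TTheory GRing.Theory Num.Theory.
Local Open Scope classical_set_scope.
Local Open Scope ring_scope.

Section IntervalCovers.
Variable R : realType.
Local Notation mu := (@lebesgue_measure R).

Lemma lebesgue_measure_co (x y : R) :
  mu `[x, y[%classic = if x < y then (y - x)%:E else 0%E.
Proof. by rewrite lebesgue_measure_itv /= lte_fin; case: ifP. Qed.

Definition co_cover (l : seq (R * R)) : set R :=
  \big[setU/set0]_(x <- l) `[x.1, x.2[%classic.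

Definition stretch2 (x : R * R) : R * R := (x.1, 2 * x.2 - x.1).

Definition overlap (x y : R * R) : bool :=
  [&& x.1 < y.2, y.1 < x.2, x.1 < x.2 & y.1 < y.2].

Definition hull (x y : R * R) : R * R := (Num.min x.1 y.1, Num.max x.2 y.2).

Lemma measurable_co_cover l : measurable (co_cover l).
Proof. by apply: bigsetU_measurable => *; exact: measurable_itv. Qed.

Lemma co_cover_cons x l :
  co_cover (x :: l) = `[x.1, x.2[%classic `|` co_cover l.
Proof. exact: big_cons. Qed.

Lemma co_union_hull x y : overlap x y ->
  `[x.1, x.2[%classic `|` `[y.1, y.2[%classic = `[(hull x y).1, (hull x y).2[%classic.
Proof.
case/and4P => xy yx x12 y12; apply/seteqP; split => t /=; rewrite !in_itv /=.
  by case=> /andP[t1 t2]; rewrite ge_min lt_max t1 t2 ?orbT.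
rewrite ge_min lt_max => /andP[/orP h1 /orP h2].
have [x1t|tx1] := leP x.1 t; last by right; apply/andP; split; case: h1; lra.
have [tx2|x2t] := ltP t x.2; first by left; apply/andP.
by right; apply/andP; split; case: h2; lra.
Qed.

Lemma stretch2_union_hull x y :
  `[(stretch2 x).1, (stretch2 x).2[%classic `|` `[(stretch2 y).1, (stretch2 y).2[%classic
  `<=` `[(stretch2 (hull x y)).1, (stretch2 (hull x y)).2[%classic.
Proof.
move=> t; rewrite /= !in_itv /=.
have /andP[m1 m2] : (Num.min x.1 y.1 <= x.1) && (Num.min x.1 y.1 <= y.1).
  by rewrite !ge_min !lexx ?orbT.
have /andP[M1 M2] : (x.2 <= Num.max x.2 y.2) && (y.2 <= Num.max x.2 y.2).
  by rewrite !le_max !lexx ?orbT.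
by case=> /andP[t1 t2]; apply/andP; split; lra.
Qed.

Lemma co_cover_merge x y l : y \in l -> overlap x y ->
  co_cover (x :: l) = co_cover (hull x y :: rem y l).
Proof.
move=> yl oxy; rewrite /co_cover big_cons (perm_big _ (perm_to_rem yl)) /=.
by rewrite !big_cons setUA co_union_hull.
Qed.

Lemma stretch2_cover_merge x y l : y \in l ->
  co_cover (map stretch2 (x :: l)) `<=` co_cover (map stretch2 (hull x y :: rem y l)).
Proof.
move=> yl; rewrite /co_cover !big_map !big_cons (perm_big _ (perm_to_rem yl)) /=.
rewrite big_cons setUA; apply: setSU; exact: stretch2_union_hull.
Qed.

Lemma co_cover_disjoint x l : ~~ has (overlap x) l ->
  `[x.1, x.2[%classic `&` co_cover l = set0.
Proof.
move/hasPn=> nov; apply/seteqP; split => t //= [].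
rewrite /co_cover -bigcup_seq /= in_itv /= => /andP[x1t tx2] [y yl].
rewrite /= in_itv /= => /andP[y1t ty2].
move: (nov y yl); rewrite /overlap.
by rewrite (le_lt_trans x1t ty2) (le_lt_trans y1t tx2) (le_lt_trans x1t tx2) (le_lt_trans y1t ty2).
Qed.

Lemma lebesgue_measure_stretch2 x :
  mu `[(stretch2 x).1, (stretch2 x).2[%classic = (2%:E * mu `[x.1, x.2[%classic)%E.
Proof.
rewrite !lebesgue_measure_co /=.
have [x12|x21] := ltP x.1 x.2; last by rewrite ifF ?mule0 //; apply/negbTE; rewrite -leNgt; lra.
by rewrite ifT -?EFinM; [congr EFin; lra | lra].
Qed.

(* Strong induction on the length: merging two overlapping intervals into their
   hull shortens the list. *)
Lemma measure_stretch2_cover l :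
  (mu (co_cover (map stretch2 l)) <= 2%:E * mu (co_cover l))%E.
Proof.
move: {2}(size l) (leqnn (size l)) => m; elim: m l => [|m IH] [|x l] //=;
  rewrite ?ltnS => sz; try by rewrite /co_cover !big_nil measure0 mule0.
have [/hasP[y yl oxy]|nov] := boolP (has (overlap x) l).
  have sz' : (size (hull x y :: rem y l) <= m)%N.
    by rewrite /= size_rem // prednK //; case: (l) yl.
  rewrite (co_cover_merge yl oxy); apply: le_trans (IH _ sz').
  apply: le_measure; rewrite ?inE; try exact: measurable_co_cover.
  exact: stretch2_cover_merge.
rewrite !co_cover_cons [X in (_ <= _ * X)%E]measureU; first last.
- exact: co_cover_disjoint.
- exact: measurable_co_cover.
- exact: measurable_itv.
rewrite ge0_muleDr // -lebesgue_measure_stretch2.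
apply: le_trans (leeD (lexx _) (IH _ sz)).
apply: measureU2; [exact: measurable_itv | exact: measurable_co_cover].
Qed.

End IntervalCovers.

Section NonnegativeIntegrals.
Context {d : measure_display} {T : measurableType d} {R : realType}.
Variable mu : {measure set T -> \bar R}.

Lemma ge0_sum_integral (I : finType) (f : I -> T -> R) :
  (forall i, measurable_fun setT (f i)) -> (forall i t, 0 <= f i t) ->
  (\sum_i \int[mu]_t (f i t)%:E = \int[mu]_t (\sum_i f i t)%:E)%E.
Proof.
move=> mf f0; rewrite -ge0_integral_sum //.
- by apply: eq_integral => t _; rewrite sumEFin.
- by move=> i; apply/measurable_EFinP; exact: mf.
- by move=> i t _; rewrite lee_fin.
Qed.

Lemma measure_integral_indic (A : set T) (c : R) : measurable A -> 0 <= c ->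
  (c%:E * mu A = \int[mu]_t (c * \1_A t)%:E)%E.
Proof.
move=> mA c0; rewrite -[A in mu A]setIT -integral_indic // -ge0_integralZl_EFin //.
by apply/measurable_EFinP; exact: measurable_indic.
Qed.

Lemma le_measure_sum_integral (I : finType) (f : I -> T -> R) (A : set T) (c : R) :
  measurable A -> 0 <= c ->
  (forall i, measurable_fun setT (f i)) -> (forall i t, 0 <= f i t) ->
  (forall t, A t -> c <= \sum_i f i t) ->
  (c%:E * mu A <= \sum_i \int[mu]_t (f i t)%:E)%E.
Proof.
move=> mA c0 mf f0 fA; rewrite measure_integral_indic // ge0_sum_integral //.
apply: ge0_le_integral => //.
- by move=> t _; rewrite lee_fin indicE mulr_ge0 //; case: (_ \in _).
- apply/measurable_EFinP; apply: measurable_funM; first exact: measurable_cst.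
  exact: measurable_indic.
- by apply/measurable_EFinP; apply: measurable_sum => i; exact: mf.
move=> t _; rewrite lee_fin indicE.
case: (boolP (t \in A)) => [/set_mem/fA|_]; first by rewrite mulr1.
by rewrite mulr0 sumr_ge0.
Qed.

Lemma sum_integral_le_measure (I : finType) (f : I -> T -> R) (A : set T) (c : R) :
  measurable A -> 0 <= c ->
  (forall i, measurable_fun setT (f i)) -> (forall i t, 0 <= f i t) ->
  (forall t, \sum_i f i t <= c) -> (forall i t, ~ A t -> f i t = 0) ->
  (\sum_i \int[mu]_t (f i t)%:E <= c%:E * mu A)%E.
Proof.
move=> mA c0 mf f0 fc fA; rewrite measure_integral_indic // ge0_sum_integral //.
apply: ge0_le_integral => //.
- by move=> t _; rewrite lee_fin sumr_ge0.
- by apply/measurable_EFinP; apply: measurable_sum => i; exact: mf.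
- apply/measurable_EFinP; apply: measurable_funM; first exact: measurable_cst.
  exact: measurable_indic.
move=> t _; rewrite lee_fin indicE.
case: (boolP (t \in A)) => [_|tA]; first by rewrite mulr1.
by rewrite mulr0 big1 // => i _; apply: fA => /mem_set; exact/negP.
Qed.

Lemma integral_setT_vanishing (D : set T) (f : T -> R) :
  (forall t, ~ D t -> f t = 0) ->
  (\int[mu]_(t in D) (f t)%:E = \int[mu]_t (f t)%:E)%E.
Proof.
move=> f0; rewrite integral_mkcond; apply: eq_integral => t _.
rewrite patchE; case: ifPn => // tD.
by rewrite f0 // => /mem_set; exact/negP.
Qed.

End NonnegativeIntegrals.

Lemma integral_itv_le_bound (R : realType) (g : R -> R) (x y c : R) :
  x <= y -> measurable_fun setT g -> (forall t, 0 <= g t <= c) ->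
  (\int[@lebesgue_measure R]_(t in `[x, y]) (g t)%:E <= (c * (y - x))%:E)%E.
Proof.
move=> xy mg gb.
apply: (@le_trans _ _ (\int[@lebesgue_measure R]_(t in `[x, y]) (cst c%:E) t)%E).
  apply: ge0_le_integral => //.
  - by move=> t _; rewrite lee_fin; case/andP: (gb t).
  - by apply/measurable_EFinP; apply: measurable_funS mg.
  - by move=> t _; rewrite lee_fin; case/andP: (gb t).
rewrite integral_cst; last exact: measurable_itv.
rewrite -[X in (_ * X <= _)%E]/(lebesgue_measure `[x, y]%classic).
rewrite lebesgue_measure_itv /= lte_fin.
have [_|yx] := ltP x y; first by rewrite -EFinM.
have -> : y = x by apply/eqP; rewrite eq_le yx xy.
by rewrite subrr mulr0 mule0.
Qed.

Section Tasks.
Variables (R : realType) (p n : nat) (T : 'I_n -> task R).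
Hypothesis hV : valid_process p T.

Lemma sigma_le_piw i : sigma (T i) <= piw (T i).
Proof.
by have [_ /(_ i)[_ [sg0 /andP[+ _]]]] := hV; rewrite ler_pdivlMr // mul1r.
Qed.

Lemma piw_div_le_sigma i : piw (T i) / p%:R <= sigma (T i).
Proof.
have [p0 /(_ i)[_ [sg0 /andP[_ r]]]] := hV.
by rewrite ler_pdivrMr ?ltr0n // mulrC -ler_pdivrMr.
Qed.

Lemma piw_div_gt0 i : 0 < piw (T i) / p%:R.
Proof.
have [p0 /(_ i)[_ [sg0 _]]] := hV.
by rewrite divr_gt0 ?ltr0n // (lt_le_trans sg0) // sigma_le_piw.
Qed.

End Tasks.

Section UnkSchedule.
Variables (R : realType) (p n : nat) (T : 'I_n -> task R) (s C : 'I_n -> R).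
Hypothesis hV : valid_process p T.
Hypothesis hU : unk_run p T s C.
Local Notation mu := (@lebesgue_measure R).
Local Notation u := (unk_rate p T s C).

Lemma unk_rate_ge0 i t : 0 <= u i t.
Proof.
rewrite /unk_rate; case: ifP => // _; case: ifP => // _.
by rewrite subr_ge0 ler_nat; exact: hU.2.1.
Qed.

Lemma unk_rate_le i t : u i t <= p%:R.
Proof.
rewrite /unk_rate; case: ifP => // _; case: ifP => // _.
  by rewrite ler1n; case: hV.
by rewrite lerBlDr lerDl.
Qed.

Lemma unk_rateE i :
  u i = fun t => \1_(`[s i, C i[%classic) t *
    (if unk_serial T s i then 1
     else p%:R - \sum_j (unk_serial T s j)%:R * \1_(`[s j, C j[%classic) t).
Proof.
have indic_co (x y t : R) : \1_(`[x, y[%classic) t = ((x <= t) && (t < y))%:R :> R.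
  by rewrite indicE mem_setE in_itv.
apply/funext => t; rewrite /unk_rate indic_co /running.
case: (_ && _); rewrite ?mul0r ?mul1r //; case: ifP => // _.
rewrite /nser -sum1_card natr_sum big_mkcond /=; congr (_ - _).
apply: eq_bigr => j _; rewrite indic_co /running -natrM mulnb.
case: ifPn => [/set_mem -> //|nin]; case: (boolP [&& _, _ & _]) => // h.
by case/negP: nin; exact: mem_set.
Qed.

Lemma measurable_unk_rate i : measurable_fun setT (u i).
Proof.
rewrite unk_rateE; apply: measurable_funM; first exact: measurable_indic (measurable_itv _).
case: (unk_serial T s i); first exact: measurable_cst.
apply: measurable_funB; first exact: measurable_cst.
apply: measurable_sum => j; apply: measurable_funM; first exact: measurable_cst.
exact: measurable_indic (measurable_itv _).
Qed.

Lemma integral_unk_rate i :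
  (\int[mu]_t (u i t)%:E = (work (~~ unk_serial T s i) (T i))%:E)%E.
Proof.
rewrite -(hU.1 i).2.2; apply/esym/integral_setT_vanishing => t.
rewrite /= in_itv /= /unk_rate /running => st.
by case: ifP => // /andP[sit /ltW tC]; case: st; rewrite sit tC.
Qed.

Lemma measurable_unk_saturated : measurable [set t | unk_saturated p T s C t].
Proof.
have mf : measurable_fun setT (fun t => \sum_i u i t).
  by apply: measurable_sum => i; exact: measurable_unk_rate.
by rewrite -[X in measurable X]setTI; exact: mf measurableT _ (measurable_set1 p%:R).
Qed.

Lemma saturated_le_unk_work :
  ((p%:R)%:E * mu [set t | unk_saturated p T s C t]
     <= \sum_i (work (~~ unk_serial T s i) (T i))%:E)%E.
Proof.
under eq_bigr do rewrite -integral_unk_rate.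
apply: le_measure_sum_integral => //.
- exact: measurable_unk_saturated.
- exact: measurable_unk_rate.
- exact: unk_rate_ge0.
- by move=> t ->.
Qed.

Lemma unk_par_duration i : ~~ unk_serial T s i ->
  piw (T i) / p%:R <= C i - s i.
Proof.
move=> par_i; have := (hU.1 i).2.2; rewrite /work par_i /= => hw.
have := integral_itv_le_bound (hU.1 i).2.1 (measurable_unk_rate i).
move=> /(_ p%:R (fun t => introT andP (conj (unk_rate_ge0 i t) (unk_rate_le i t)))).
by rewrite hw lee_fin ler_pdivrMr ?ltr0n; [rewrite mulrC | case: hV].
Qed.

Lemma unk_par_windows_disjoint i j :
  ~~ unk_serial T s i -> ~~ unk_serial T s j ->
  `[s i, s i + piw (T i) / p%:R[%classic `&` `[s j, s j + piw (T j) / p%:R[%classic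
    !=set0 -> i = j.
Proof.
move=> par_i par_j [t [/=]]; rewrite !in_itv /= => /andP[t1 t2] /andP[t3 t4].
apply/eqP/negPn/negP => ij.
have := unk_par_duration par_i; have := unk_par_duration par_j.
by case: (hU.2.2.2.1 i j ij par_i par_j) => ? ? ?; lra.
Qed.

End UnkSchedule.

Section OfflineSchedule.
Variables (R : realType) (p n : nat) (T : 'I_n -> task R) (S : schedule R n).
Hypothesis hF : feasible p T S.
Local Notation mu := (@lebesgue_measure R).
Local Notation alive := (\bigcup_(i in [set: 'I_n]) `[arr (T i), fin S i[%classic).

Lemma rate_ge0 i t : 0 <= rate S i t.
Proof. by have [k ->] := (hF.1 i).2.1 t. Qed.

Lemma integral_rate i :
  (\int[mu]_t (rate S i t)%:E = (work (par S i) (T i))%:E)%E.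
Proof.
rewrite -(hF.1 i).2.2.2.2.2; apply/esym/integral_setT_vanishing => t.
rewrite /= in_itv /= => tout; apply: (hF.1 i).2.2.1.
have [|ait] := ltP t (arr (T i)); [by left | right].
by rewrite leNgt; apply/negP => tfi; apply: tout; rewrite ait ltW.
Qed.

Lemma measurable_alive : measurable alive.
Proof.
apply: fin_bigcup_measurable; first exact: finite_finset.
by move=> i _; exact: measurable_itv.
Qed.

Lemma sched_work_le_awake :
  (\sum_i (work (par S i) (T i))%:E <= (p%:R)%:E * awake T (fin S))%E.
Proof.
under eq_bigr do rewrite -integral_rate.
apply: sum_integral_le_measure => //.
- exact: measurable_alive.
- by move=> i; exact: (hF.1 i).1.
- exact: rate_ge0.
- exact: hF.2.
move=> i t tA; apply: (hF.1 i).2.2.1.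
have [|ait] := ltP t (arr (T i)); first by left.
have [|tfi] := leP (fin S i) t; first by right.
by case: tA; exists i => //=; rewrite in_itv /= ait tfi.
Qed.

Lemma sched_serial_duration i : ~~ par S i -> sigma (T i) <= fin S i - arr (T i).
Proof.
move=> ser_i; have := (hF.1 i).2.2.2.2.2; rewrite /work (negbTE ser_i) => hw.
have rate_le1 t : 0 <= rate S i t <= 1.
  by rewrite rate_ge0; exact: (hF.1 i).2.2.2.2.1 ser_i t.
have := integral_itv_le_bound (hF.1 i).2.2.2.1 (hF.1 i).1 rate_le1.
by rewrite hw lee_fin mul1r.
Qed.

End OfflineSchedule.

Section UnkVersusSchedule.
Variables (R : realType) (p n : nat) (T : 'I_n -> task R) (s C : 'I_n -> R).
Variable S : schedule R n.
Hypothesis hV : valid_process p T.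
Hypothesis hU : unk_run p T s C.
Hypothesis hF : feasible p T S.
Local Notation mu := (@lebesgue_measure R).

Definition unk_par_sched_ser i := ~~ unk_serial T s i && ~~ par S i.

Lemma unk_work_le_sched_work :
  \sum_i work (~~ unk_serial T s i) (T i)
    <= \sum_i work (par S i) (T i) + \sum_(i | unk_par_sched_ser i) piw (T i).
Proof.
rewrite [X in _ <= _ + X]big_mkcond -big_split /=; apply: ler_sum => i _.
have [_ /(_ i)[_ [sg0 _]]] := hV; have := sigma_le_piw hV i.
rewrite /unk_par_sched_ser /work.
by case: (unk_serial T s i); case: (par S i) => /= sp; lra.
Qed.

Lemma unk_par_sched_ser_windows_le_awake :
  (\sum_(i | unk_par_sched_ser i) (piw (T i) / p%:R)%:E <= 2%:E * awake T (fin S))%E.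
Proof.
pose W i := `[s i, s i + piw (T i) / p%:R[%classic.
pose l := [seq (arr (T i), arr (T i) + sigma (T i)) | i <- index_enum 'I_n & unk_par_sched_ser i].
have -> : (\sum_(i | unk_par_sched_ser i) (piw (T i) / p%:R)%:E
           = mu (\big[setU/set0]_(i < n | unk_par_sched_ser i) W i))%E.
  rewrite measure_bigsetU_ord_cond.
  - apply: eq_bigr => i _; rewrite -[X in _ = X]/(mu (W i)) lebesgue_measure_co.
    by rewrite ltrDl piw_div_gt0 // addrAC subrr add0r.
  - by move=> i _; exact: measurable_itv.
  by move=> i j /andP[par_i _] /andP[par_j _]; apply/(unk_par_windows_disjoint hV hU).
apply: (@le_trans _ _ (mu (co_cover (map (@stretch2 R) l)))).
  apply: le_measure; rewrite ?inE.
  - by apply: bigsetU_measurable => i _; rewrite /W; exact: measurable_itv.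
  - exact: measurable_co_cover.
  rewrite /co_cover big_map big_map big_filter.
  elim/big_ind2: _ => // [A1 A2 B1 B2 ? ?|i /andP[par_i _] t]; first exact: setUSS.
  have := (hU.1 i).1; have := piw_div_le_sigma hV i.
  move: par_i; rewrite /unk_serial -leNgt /W /= !in_itv /=.
  by move=> ? ? ? /andP[? ?]; apply/andP; split; lra.
apply: le_trans (measure_stretch2_cover l) _; apply: lee_wpmul2l => //.
apply: le_measure; rewrite ?inE; [exact: measurable_co_cover | exact: measurable_alive |].
rewrite /co_cover big_map big_filter -bigcup_seq_cond => t [i /= /andP[_ /andP[_ ser_i]]].
have := sched_serial_duration hF ser_i.
rewrite in_itv /= => ? /andP[? ?]; exists i => //=; rewrite in_itv /=; apply/andP; split; lra.
Qed.

Lemma unk_saturated_le_3awake :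
  (mu [set t | unk_saturated p T s C t] <= 3%:E * awake T (fin S))%E.
Proof.
have p_gt0 : 0 < p%:R :> R by rewrite ltr0n; case: hV.
have awake_ge0 : (0 <= awake T (fin S))%E by exact: measure_ge0.
rewrite -(@lee_pmul2l _ (p%:R)%:E) ?lte_fin //.
apply: le_trans (saturated_le_unk_work hU) _; rewrite sumEFin.
apply: (le_trans (y := (\sum_i work (par S i) (T i))%:E
  + (p%:R)%:E * \sum_(i | unk_par_sched_ser i) (piw (T i) / p%:R)%:E)%E).
  rewrite sumEFin -mulr_suml -EFinM mulrCA mulfV ?gt_eqF // mulr1 -EFinD lee_fin.
  exact: unk_work_le_sched_work.
have -> : (3 : R)%:E = (1 + 2)%:E by congr EFin; lra.
rewrite EFinD ge0_muleDl // mul1e ge0_muleDr //; last exact: mule_ge0.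
apply: leeD; first by rewrite -sumEFin; exact: sched_work_le_awake.
by apply: lee_wpmul2l; [rewrite lee_fin ltW | exact: unk_par_sched_ser_windows_le_awake].
Qed.

End UnkVersusSchedule.

Theorem lemma5p3 (R : realType) (p n : nat) (T : 'I_n -> task R)
  (s C : 'I_n -> R) :
  valid_process p T -> unk_run p T s C ->
  ((@lebesgue_measure R) [set t : R | unk_saturated p T s C t]
     <= 3%:E * OPT_awake p T)%E.
Proof.
move=> hV hU; rewrite /OPT_awake -ereal_inf_pZl //.
apply: le_ereal_inf_tmp => _ [_ [S hF <-] <-].
exact: unk_saturated_le_3awake.
Qed.
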